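(* Assume that for every $A\in\mathcal B(E)$, $m(A)>0$ implies $R1_A(x)>0$ for $m$-a.e. $x$. Let $\nu\in\mathcal M(E)$ with $\nu\ll m$, and let $A\in\mathcal B(E)$ with $m(A)>0$. Then there exist $t_0>0$ and $B\in\mathcal B(E)$ with $\nu(B)>0$ such that $\inf_{x\in B}p_{t_0}(x,A)>0$.
   Context: $(E,\mathcal B(E),m)$ is a $\sigma$-finite measure space; $\mathcal M(E)$ the probability measures on it. $p_t(x,\cdot)$, $t\ge0$, is a transition probability function (probability measures, jointly measurable in $(t,x)$, $p_0(x,A)=1_A(x)$); $p_tf(x)=\int f\,dp_t(x,\cdot)$; $Rf(x)=\int_0^\infty e^{-t}p_tf(x)\,dt$. *)

From HB Require Import structures.
From mathcomp Require Import all_boot all_order all_algebra.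
From mathcomp Require Import all_classical all_reals all_analysis.
From mathcomp Require Import measurable_realfun.
Set Implicit Arguments. Unset Strict Implicit. Unset Printing Implicit Defensive.
Import Order.TTheory GRing.Theory Num.Theory.
Local Open Scope classical_set_scope.
Local Open Scope ring_scope.
Local Open Scope ereal_scope.

Definition transition_prob_fun d (T : measurableType d) (R : realType)
  (p : R -> T -> probability T R) : Prop :=
  (forall A : set T, measurable A ->
     measurable_fun ((`[0%R, +oo[%classic : set R) `*` [set: T] : set (R * T))
       (fun tx : R * T => (p tx.1 tx.2 A : \bar R))) /\
  (forall x (A : set T), measurable A -> p 0%R x A = (\1_A x)%:E).

Definition resolvent1 d (T : measurableType d) (R : realType)
  (p : R -> T -> probability T R) (A : set T) (x : T) : \bar R :=
  \int[lebesgue_measure]_(t in `[0%R, +oo[%classic) ((expR (- t))%:E * p t x A).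

From HB Require Import structures.
From mathcomp Require Import all_boot all_order all_algebra.
From mathcomp Require Import all_classical all_reals all_analysis.
From mathcomp Require Import measurable_realfun.
Set Implicit Arguments. Unset Strict Implicit. Unset Printing Implicit Defensive.
Import Order.TTheory GRing.Theory Num.Theory.
Local Open Scope classical_set_scope.
Local Open Scope ring_scope.
Local Open Scope ereal_scope.

(* Since [nu << m], [R 1_A > 0] holds [nu]-a.e., hence [\int R 1_A dnu > 0].
   By Tonelli this integral is [\int_0^oo e^{-t} \int p_t(x, A) nu(dx) dt], and
   as [{0}] is Lebesgue-null the inner integral is positive at some [t0 > 0].
   A nonnegative function with positive integral exceeds some [eps > 0] on a
   set [B] of positive measure, and on [B] we have
   [p_t0(x, A) >= e^{-t0} p_t0(x, A) > eps]. *)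

Section ae_integral.
Context d (T : measurableType d) (R : realType).
Implicit Types (mu nu : {measure set T -> \bar R}) (f : T -> \bar R).

Lemma null_dominates_ae nu mu (P : T -> Prop) :
  nu `<< mu -> {ae mu, forall x, P x} -> {ae nu, forall x, P x}.
Proof.
move=> /null_content_dominatesP numu [N [mN muN0 PN]].
by exists N; split => //; exact: numu.
Qed.

Lemma integral_ae_eq0 mu f : measurable_fun setT f ->
  {ae mu, forall x, f x = 0} -> \int[mu]_x f x = 0.
Proof.
move=> mf f0; rewrite (ae_eq_integral (cst 0)) ?integral0//.
by apply: filterS f0 => x fx0 _.
Qed.

Lemma ae_gt0_integral_gt0 mu f : measurable_fun setT f ->
  (forall x, 0 <= f x) -> mu setT != 0 -> {ae mu, forall x, 0 < f x} ->
  0 < \int[mu]_x f x.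
Proof.
move=> mf f0 muT fgt0; rewrite lt0e integral_ge0// andbT.
apply: contra muT => /eqP intf0.
have /(ae_eq_integral_abs mu measurableT mf) fae0 :
    \int[mu]_(x in setT) `|f x| = 0.
  by rewrite -intf0; apply: eq_integral => x _; rewrite gee0_abs.
have [N [mN muN0]] : {ae mu, forall x : T, False}.
  by apply: filterS2 fgt0 fae0 => x fx /(_ I) fx0; move: fx; rewrite fx0 ltxx.
by rewrite setC0 subTset => <-; rewrite muN0.
Qed.

Lemma integral_gt0_superlevel mu f : measurable_fun setT f ->
  (forall x, 0 <= f x) -> 0 < \int[mu]_x f x ->
  exists eps : R, [/\ (0 < eps)%R, measurable [set x | eps%:E < f x]
                    & 0 < mu [set x | eps%:E < f x]].
Proof.
move=> mf f0 intf; apply: contrapT => noeps; move: intf.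
have mlevel (eps : R) : measurable [set x | eps%:E < f x].
  by rewrite -[X in measurable X]setTI; exact: emeasurable_fun_o_infty.
suff -> : \int[mu]_x f x = 0 by rewrite ltxx.
apply: integral_ae_eq0 => //.
have levelN n : mu.-negligible [set x | n.+1%:R^-1%:E < f x].
  exists [set x | n.+1%:R^-1%:E < f x]; split => //.
  apply/eqP; rewrite eq_le measure_ge0 andbT leNgt; apply/negP => lvl.
  by apply: noeps; exists n.+1%:R^-1%R; split.
apply: negligibleS (negligible_bigcup levelN) => x /= fx0.
suff [n fxn] : exists n, (n.+1%:R^-1)%:E < f x by exists n.
have {fx0} : 0 < f x by rewrite lt0e f0 andbT; exact/eqP.
case: (f x) => [r||] //= r0; last by exists 0%N; rewrite ltry.
exists (Num.truncn r^-1); rewrite lte_fin invf_plt ?posrE//.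
exact: truncnS_gt.
Qed.

End ae_integral.

Lemma integral_gt0_exists_pos (R : realType) (h : R -> \bar R) :
  measurable_fun setT h -> (forall t, 0 <= h t) ->
  (forall t, (t < 0)%R -> h t = 0) -> 0 < \int[lebesgue_measure]_t h t ->
  exists2 t, (0 < t)%R & 0 < h t.
Proof.
move=> mh h0 hneg inth; apply: contrapT => nopos; move: inth.
suff -> : \int[lebesgue_measure]_t h t = 0 by rewrite ltxx.
apply: integral_ae_eq0 => //.
exists [set 0%R]; split => //; first exact: lebesgue_measure_set1.
move=> t /= ht; apply: contrapT => t_neq0; apply: ht.
have [t_lt0|t_gt0|] := ltgtP t 0%R; [exact: hneg| |by []].
apply/eqP; rewrite eq_le h0 andbT leNgt; apply/negP => ht_gt0.
by apply: nopos; exists t.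
Qed.

Section resolvent_density.
Context d (T : measurableType d) (R : realType) (p : R -> T -> probability T R).
Variable A : set T.
Let D : set (R * T) := `[0%R, +oo[%classic `*` [set: T].
Hypothesis p_meas : measurable_fun D (fun tx => (p tx.1 tx.2 A : \bar R)).

Let mD : measurable D.
Proof. by apply: measurableX => //; exact: measurable_itv. Qed.

(* [e^{-t} p_t(x, A)], extended by [0] to [t < 0] so that Tonelli's theorem
   applies on the whole of [R * T]. *)
Definition resolvent_density : R * T -> \bar R :=
  (fun tx => (expR (- tx.1))%:E * p tx.1 tx.2 A) \_ D.

Lemma measurable_resolvent_density : measurable_fun setT resolvent_density.
Proof.
apply/(measurable_restrictT _ mD); apply: emeasurable_funM => //.
apply/measurable_EFinP; apply: measurableT_comp => //.
by apply: measurable_funTS; exact: measurableT_comp.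
Qed.

Lemma resolvent_density_ge0 tx : 0 <= resolvent_density tx.
Proof.
rewrite /resolvent_density patchE; case: ifP => // _.
by rewrite mule_ge0// lee_fin expR_ge0.
Qed.

Lemma resolvent_densityN t x : (t < 0)%R -> resolvent_density (t, x) = 0.
Proof.
move=> t0; rewrite /resolvent_density patchE memNset//= => -[/=].
by rewrite in_itv/= andbT leNgt t0.
Qed.

Lemma resolvent_density_le t x : resolvent_density (t, x) <= p t x A.
Proof.
rewrite /resolvent_density patchE.
case: ifPn => [/set_mem[/= + _]|_]; last exact: measure_ge0.
rewrite in_itv/= andbT => t0.
by rewrite -[leRHS]mul1e lee_wpmul2r// lee_fin expR_le1 oppr_le0.
Qed.

Lemma resolvent1E x :
  resolvent1 p A x = \int[lebesgue_measure]_t resolvent_density (t, x).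
Proof.
rewrite /resolvent1 integral_mkcond; apply: eq_integral => t _.
rewrite /resolvent_density !patchE; congr (if _ then _ else _).
by apply/idP/idP => /set_mem; rewrite inE => //= -[].
Qed.

End resolvent_density.

Theorem lemma4p1 (d : measure_display) (T : measurableType d) (R : realType)
  (m : {measure set T -> \bar R}) (p : R -> T -> probability T R) :
  sigma_finite [set: T] m ->
  transition_prob_fun p ->
  (forall A : set T, measurable A -> 0 < m A ->
     {ae m, forall x, 0 < resolvent1 p A x}) ->
  forall (nu : probability T R), nu `<< m ->
  forall A : set T, measurable A -> 0 < m A ->
  exists t0 : R, exists B : set T,
    (0 < t0)%R /\ measurable B /\ 0 < nu B /\
    0 < ereal_inf [set p t0 x A | x in B].
Proof.
move=> _ [p_meas _] R_gt0 nu nu_m A mA mA_gt0.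
have mf := measurable_resolvent_density (p_meas A mA).
have f_ge0 := resolvent_density_ge0 p A.
have : 0 < \int[nu]_x \int[lebesgue_measure]_t resolvent_density p A (t, x).
  apply: ae_gt0_integral_gt0.
  - exact: measurable_fun_fubini_tonelli_G.
  - by move=> x; exact: integral_ge0.
  - by have := probability_setT nu; rewrite /= => ->.
  - apply: filterS (null_dominates_ae nu_m (R_gt0 A mA mA_gt0)) => x.
    by rewrite resolvent1E.
rewrite -fubini_tonelli// => /integral_gt0_exists_pos[].
- exact: measurable_fun_fubini_tonelli_F.
- by move=> t; exact: integral_ge0.
- by move=> t t0; apply: integral0_eq => x _; rewrite resolvent_densityN.
move=> t0 t0_gt0 /integral_gt0_superlevel[].
- exact: measurable_fun_pair2.
- by move=> x; exact: f_ge0.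
move=> eps [eps_gt0 mB nuB].
exists t0, [set x | eps%:E < resolvent_density p A (t0, x)].
split=> //; split=> //; split=> //.
apply: (@lt_le_trans _ _ eps%:E); first by rewrite lte_fin.
apply: le_ereal_inf_tmp => _ [x Bx <-].
exact: le_trans (ltW Bx) (resolvent_density_le p A t0 x).
Qed.
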